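(* (Absolute concentration robustness of OmpR-P.) For the EnvZ/OmpR network described in the context and any positive values of $k_1,\dots,k_{15}$, at every steady state with $[\mathrm{EnvZ\text{-}ATP}]\neq0$ (in particular at every positive steady state) one has \[[\mathrm{OmpR\text{-}P}]=\frac{k_1k_3k_5(k_{11}+k_{12})(k_{14}+k_{15})}{k_1k_3k_{10}k_{12}(k_{14}+k_{15})+k_2k_{13}k_{15}(k_4+k_5)(k_{11}+k_{12})}.\] In particular this value depends only on the rate constants and not on the initial conditions or total amounts of EnvZ and OmpR.
   Context: The EnvZ/OmpR network has mass-action kinetics and reactions $\mathrm{EnvZ\text{-}ADP}\underset{k_2}{\overset{k_1}{\rightleftharpoons}}\mathrm{EnvZ}\underset{k_4}{\overset{k_3}{\rightleftharpoons}}\mathrm{EnvZ\text{-}ATP}\xrightarrow{k_5}\mathrm{EnvZ\text{-}P}$; $\mathrm{EnvZ\text{-}P}+\mathrm{OmpR}\underset{k_7}{\overset{k_6}{\rightleftharpoons}}\mathrm{EnvZ\text{-}P\text{-}OmpR}\underset{k_9}{\overset{k_8}{\rightleftharpoons}}\mathrm{EnvZ}+\mathrm{OmpR\text{-}P}$; $\mathrm{EnvZ\text{-}ATP}+\mathrm{OmpR\text{-}P}\underset{k_{11}}{\overset{k_{10}}{\rightleftharpoons}}\mathrm{EnvZ\text{-}ATP\text{-}OmpR\text{-}P}\xrightarrow{k_{12}}\mathrm{EnvZ\text{-}ATP}+\mathrm{OmpR}$; $\mathrm{EnvZ\text{-}ADP}+\mathrm{OmpR\text{-}P}\underset{k_{14}}{\overset{k_{13}}{\rightleftharpoons}}\mathrm{EnvZ\text{-}ADP\text{-}OmpR\text{-}P}\xrightarrow{k_{15}}\mathrm{EnvZ\text{-}ADP}+\mathrm{OmpR}$.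 Here each name denotes a chemical species (hyphenated names are single species, i.e. bound forms), square brackets denote concentrations, and a steady state is a nonnegative concentration vector at which all mass-action rates of change vanish. *)

From Stdlib Require Import Reals.
Open Scope R_scope.

Record conc := mkConc {
  XD : R;    (* [EnvZ-ADP] *)
  X : R;     (* [EnvZ] *)
  XT : R;    (* [EnvZ-ATP] *)
  XP : R;    (* [EnvZ-P] *)
  Y : R;     (* [OmpR] *)
  XPY : R;   (* [EnvZ-P-OmpR] *)
  YP : R;    (* [OmpR-P] *)
  XTYP : R;  (* [EnvZ-ATP-OmpR-P] *)
  XDYP : R   (* [EnvZ-ADP-OmpR-P] *)
}.

(* Rate constants k_1..k_15, indexed by nat (k 1, ..., k 15). *)
Definition rates := nat -> R.

Section Fluxes.
Variables (k : rates) (c : conc).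
Definition r1  := k 1%nat * XD c.            (* EnvZ-ADP -> EnvZ *)
Definition r2  := k 2%nat * X c.             (* EnvZ -> EnvZ-ADP *)
Definition r3  := k 3%nat * X c.             (* EnvZ -> EnvZ-ATP *)
Definition r4  := k 4%nat * XT c.            (* EnvZ-ATP -> EnvZ *)
Definition r5  := k 5%nat * XT c.            (* EnvZ-ATP -> EnvZ-P *)
Definition r6  := k 6%nat * XP c * Y c.      (* EnvZ-P + OmpR -> EnvZ-P-OmpR *)
Definition r7  := k 7%nat * XPY c.           (* reverse *)
Definition r8  := k 8%nat * XPY c.           (* EnvZ-P-OmpR -> EnvZ + OmpR-P *)
Definition r9  := k 9%nat * X c * YP c.      (* reverse *)
Definition r10 := k 10%nat * XT c * YP c.    (* EnvZ-ATP + OmpR-P -> EnvZ-ATP-OmpR-P *)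
Definition r11 := k 11%nat * XTYP c.         (* reverse *)
Definition r12 := k 12%nat * XTYP c.         (* EnvZ-ATP-OmpR-P -> EnvZ-ATP + OmpR *)
Definition r13 := k 13%nat * XD c * YP c.    (* EnvZ-ADP + OmpR-P -> EnvZ-ADP-OmpR-P *)
Definition r14 := k 14%nat * XDYP c.         (* reverse *)
Definition r15 := k 15%nat * XDYP c.         (* EnvZ-ADP-OmpR-P -> EnvZ-ADP + OmpR *)
End Fluxes.

Definition dXD k c   := r2 k c - r1 k c - r13 k c + r14 k c + r15 k c.
Definition dX k c    := r1 k c - r2 k c - r3 k c + r4 k c + r8 k c - r9 k c.
Definition dXT k c   := r3 k c - r4 k c - r5 k c - r10 k c + r11 k c + r12 k c.
Definition dXP k c   := r5 k c - r6 k c + r7 k c.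
Definition dY k c    := - r6 k c + r7 k c + r12 k c + r15 k c.
Definition dXPY k c  := r6 k c - r7 k c - r8 k c + r9 k c.
Definition dYP k c   := r8 k c - r9 k c - r10 k c + r11 k c - r13 k c + r14 k c.
Definition dXTYP k c := r10 k c - r11 k c - r12 k c.
Definition dXDYP k c := r13 k c - r14 k c - r15 k c.

Definition nonneg (c : conc) : Prop :=
  0 <= XD c /\ 0 <= X c /\ 0 <= XT c /\ 0 <= XP c /\ 0 <= Y c /\
  0 <= XPY c /\ 0 <= YP c /\ 0 <= XTYP c /\ 0 <= XDYP c.

Definition steady_state (k : rates) (c : conc) : Prop :=
  nonneg c /\
  dXD k c = 0 /\ dX k c = 0 /\ dXT k c = 0 /\ dXP k c = 0 /\ dY k c = 0 /\
  dXPY k c = 0 /\ dYP k c = 0 /\ dXTYP k c = 0 /\ dXDYP k c = 0.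

From Stdlib Require Import Reals Lra Lia.
Open Scope R_scope.

(* At a steady state, five relations between the concentrations follow
   from single species balances or sums of two of them:
     - complex balances:  (k11+k12)[XTYP] = k10[XT][YP],  (k14+k15)[XDYP] = k13[XD][YP];
     - EnvZ-ADP/EnvZ loop:  k1[XD] = k2[X];
     - EnvZ/EnvZ-ATP loop:  k3[X] = (k4+k5)[XT];
     - phosphate balance:  k5[XT] = k12[XTYP] + k15[XDYP]
       (phosphorylation of EnvZ equals dephosphorylation of OmpR-P).
   Substituting the first four into the fifth expresses every term as a
   multiple of [XT], giving  [XT] * ([YP] * D - N) = 0  with N, D the
   numerator and denominator of the claimed value.  Since D > 0 for
   positive rate constants, [XT] <> 0 yields [YP] = N / D. *)

Definition acr_num (k : rates) : R :=
  k 1%nat * k 3%nat * k 5%nat * (k 11%nat + k 12%nat) * (k 14%nat + k 15%nat).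

Definition acr_den (k : rates) : R :=
  k 1%nat * k 3%nat * k 10%nat * k 12%nat * (k 14%nat + k 15%nat)
  + k 2%nat * k 13%nat * k 15%nat * (k 4%nat + k 5%nat) * (k 11%nat + k 12%nat).

Lemma acr_den_pos (k : rates) :
  (forall i : nat, (1 <= i <= 15)%nat -> 0 < k i) -> 0 < acr_den k.
Proof.
  intros Hk. unfold acr_den.
  apply Rplus_lt_0_compat; repeat apply Rmult_lt_0_compat;
    try apply Rplus_lt_0_compat; apply Hk; lia.
Qed.

Lemma XTYP_balance (k : rates) (c : conc) :
  dXTYP k c = 0 -> (k 11%nat + k 12%nat) * XTYP c = k 10%nat * XT c * YP c.
Proof. unfold dXTYP, r10, r11, r12. lra. Qed.

Lemma XDYP_balance (k : rates) (c : conc) :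
  dXDYP k c = 0 -> (k 14%nat + k 15%nat) * XDYP c = k 13%nat * XD c * YP c.
Proof. unfold dXDYP, r13, r14, r15. lra. Qed.

(* EnvZ-ADP together with its OmpR-P complex: only r1 and r2 remain. *)
Lemma XD_X_balance (k : rates) (c : conc) :
  dXD k c = 0 -> dXDYP k c = 0 -> k 1%nat * XD c = k 2%nat * X c.
Proof. unfold dXD, dXDYP, r1, r2, r13, r14, r15. lra. Qed.

(* EnvZ-ATP together with its OmpR-P complex: only r3, r4, r5 remain. *)
Lemma X_XT_balance (k : rates) (c : conc) :
  dXT k c = 0 -> dXTYP k c = 0 -> k 3%nat * X c = (k 4%nat + k 5%nat) * XT c.
Proof. unfold dXT, dXTYP, r3, r4, r5, r10, r11, r12. lra. Qed.

(* Phosphate balance: dXP - dY = r5 - r12 - r15. *)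
Lemma phosphate_balance (k : rates) (c : conc) :
  dXP k c = 0 -> dY k c = 0 ->
  k 5%nat * XT c = k 12%nat * XTYP c + k 15%nat * XDYP c.
Proof. unfold dXP, dY, r5, r6, r7, r12, r15. lra. Qed.

Lemma steady_state_acr_relation (k : rates) (c : conc) :
  steady_state k c -> XT c * (YP c * acr_den k - acr_num k) = 0.
Proof.
  intros [_ [eD [_ [eT [eP [eY [_ [_ [eTYP eDYP]]]]]]]]].
  assert (H1 := XTYP_balance k c eTYP).
  assert (H2 := XDYP_balance k c eDYP).
  assert (H3 := XD_X_balance k c eD eDYP).
  assert (H4 := X_XT_balance k c eT eTYP).
  assert (H5 := phosphate_balance k c eP eY).
  set (a := k 11%nat + k 12%nat) in *.
  set (b := k 14%nat + k 15%nat) in *.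
  assert (E : XT c * (YP c * acr_den k - acr_num k) =
    - k 1%nat * k 3%nat * a * b
        * (k 5%nat * XT c - (k 12%nat * XTYP c + k 15%nat * XDYP c))
    - k 1%nat * k 3%nat * b * k 12%nat
        * (a * XTYP c - k 10%nat * XT c * YP c)
    - k 1%nat * k 3%nat * a * k 15%nat
        * (b * XDYP c - k 13%nat * XD c * YP c)
    - a * k 15%nat * k 13%nat * k 3%nat * YP c
        * (k 1%nat * XD c - k 2%nat * X c)
    - a * k 15%nat * k 13%nat * k 2%nat * YP c
        * (k 3%nat * X c - (k 4%nat + k 5%nat) * XT c)).
  { unfold acr_den, acr_num, a, b. ring. }
  rewrite E, H1, H2, H3, H4, H5. ring.
Qed.

Theorem mainTheorem6 (k : rates) (c : conc) :
  (forall i : nat, (1 <= i <= 15)%nat -> 0 < k i) ->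
  steady_state k c ->
  XT c <> 0 ->
  YP c =
    (k 1%nat * k 3%nat * k 5%nat * (k 11%nat + k 12%nat) * (k 14%nat + k 15%nat)) /
    (k 1%nat * k 3%nat * k 10%nat * k 12%nat * (k 14%nat + k 15%nat)
     + k 2%nat * k 13%nat * k 15%nat * (k 4%nat + k 5%nat) * (k 11%nat + k 12%nat)).
Proof.
  intros Hk Hss HXT.
  change (YP c = acr_num k / acr_den k).
  assert (Hden := acr_den_pos k Hk).
  destruct (Rmult_integral _ _ (steady_state_acr_relation k c Hss))
    as [HXT0 | Hdefect]; [contradiction |].
  field_simplify_eq; lra.
Qed.
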